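(* In the two-door cascading memoryless semi-fractional setting, there is an optimal semi-fractional sequence $\pi$, that is, $\mathbb{E}[\pi]\le\mathbb{E}[\pi']$ for every semi-fractional sequence $\pi'$.
   Context: Two cascading memoryless doors with durations: parameters $p_1,p_2\in(0,1)$, $q_1=1-p_1$, $q_2=1-p_2$, and $c>0$. Both doors start closed. A semi-fractional sequence is an infinite alternating sequence of knocks $1^{t_1}\,2\,1^{t_2}\,2\cdots$ with real $t_j\ge0$. A 1-knock $1^t$ takes $t$ time units and, if door 1 is closed, opens it with probability $1-q_1^t$, independently of everything else. A 2-knock takes $c$ time units and opens door 2 with probability $p_2$ (independently) if door 1 is open at that time, and with probability $0$ otherwise. There is no feedback. The running time is the time at which both doors are open, and $\mathbb{E}[\pi]$ is its expectation for sequence $\pi$. *)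

From HB Require Import structures.
From mathcomp Require Import all_boot all_order all_algebra.
From mathcomp Require Import all_classical all_reals all_analysis.
Set Implicit Arguments. Unset Strict Implicit. Unset Printing Implicit Defensive.
Import Order.TTheory GRing.Theory Num.Theory.
Local Open Scope ring_scope.

(* A semi-fractional sequence 1^{t_1} 2 1^{t_2} 2 ... is represented by
   t : nat -> R with t k = t_{k+1} (>= 0).
   cumT t k = t_1 + ... + t_k = total 1-knock time before the k-th 2-knock. *)
Definition cumT (R : realType) (t : nat -> R) (k : nat) : R := \sum_(i < k) t i.

(* Probability that door 1 is still closed after total 1-knock time s. *)
Definition closed1 (R : realType) (p1 : R) (s : R) : R := (1 - p1) `^ s.

(* Probability that both doors are NOT yet open after the first k blocks
   (k 1-knocks and k 2-knocks).  Door 1 is first seen open at 2-knock j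
   (1 <= j <= k) with probability q1^{T_{j-1}} - q1^{T_j}; then 2-knocks
   j..k all fail with probability q2^{k-j+1}. *)
Definition survival (R : realType) (p1 p2 : R) (t : nat -> R) (k : nat) : R :=
  closed1 p1 (cumT t k) +
  \sum_(1 <= j < k.+1)
     (closed1 p1 (cumT t j.-1) - closed1 p1 (cumT t j)) * (1 - p2) ^+ (k - j + 1).

(* Expected running time.  The running time takes values in the block end
   times S_k = sum_{i<=k} (t_i + c), so E = sum_{k>=0} (S_{k+1}-S_k) P(X > S_k);
   it is an extended real (+oo allowed). *)
Definition expected_time (R : realType) (p1 p2 c : R) (t : nat -> R) : \bar R :=
  (\sum_(0 <= k <oo) ((t k + c) * survival p1 p2 t k)%:E)%E.

Definition semi_fractional (R : realType) (t : nat -> R) : Prop :=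
  forall k, 0 <= t k.

From HB Require Import structures.
From mathcomp Require Import all_boot all_order all_algebra.
From mathcomp Require Import all_classical all_reals all_analysis.
Import Order.TTheory GRing.Theory Num.Theory.
Import numFieldNormedType.Exports.

(* The expected running time E(t) is the limit of the nondecreasing partial
   sums of its series, each a continuous function of finitely many t_k; hence
   E is lower semicontinuous for the product topology on sequences. Door 2 is
   still closed after k two-knocks with probability at least (1 - p2)^k, so
   E(t) <= M forces t_k (1 - p2)^k <= M: every sublevel set of E lies in a
   product of compact intervals, compact by Tychonoff, on which E attains its
   minimum. *)

Local Open Scope classical_set_scope.
Local Open Scope ring_scope.

Section lower_semicontinuous_within.
Context {X : topologicalType} {R : realType}.
Implicit Types (f : X -> \bar R) (A B K S : set X).
Local Open Scope ereal_scope.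

Definition lower_semicontinuous_within A f :=
  forall x, A x -> forall a, a < f x -> \forall y \near x, A y -> a < f y.

Lemma lower_semicontinuous_withinS A B f : A `<=` B ->
  lower_semicontinuous_within B f -> lower_semicontinuous_within A f.
Proof.
move=> AB fB x Ax a afx; apply: filterS (fB x (AB x Ax) a afx) => y By Ay.
exact/By/AB.
Qed.

Lemma compact_lower_semicontinuous_min K f : compact K -> K !=set0 ->
  lower_semicontinuous_within K f -> exists2 x, K x & forall y, K y -> f x <= f y.
Proof.
move=> cK [x0 Kx0] fK.
pose sublevel z := [set x | K x /\ f x <= f z].
have F_filter : ProperFilter (filter_from K sublevel).
  apply: filter_from_proper => [|z Kz]; last by exists z.
  apply: filter_from_filter => [|z1 z2 Kz1 Kz2]; first by exists x0.
  have [f12|f21] := leP (f z1) (f z2).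
    by exists z1 => // x [Kx fx]; split; split => //; exact: le_trans f12.
  by exists z2 => // x [Kx fx]; split; split => //; apply: le_trans (ltW f21).
have [p [Kp p_cluster]] : K `&` cluster (filter_from K sublevel) !=set0.
  by apply: cK; exists x0 => // x [].
exists p => // z Kz; rewrite leNgt; apply/negP => fzp.
have sublevel_z : filter_from K sublevel (sublevel z) by exists z.
have [y [[Ky fyz] /(_ Ky)]] := p_cluster _ _ sublevel_z (fK p Kp _ fzp).
by rewrite ltNge fyz.
Qed.

Lemma lower_semicontinuous_coercive_min S f : S !=set0 ->
  lower_semicontinuous_within S f ->
  (forall M : R, exists K,
    [/\ compact K, [set x | S x /\ f x <= M%:E] `<=` K & K `<=` S]) ->
  exists2 x, S x & forall y, S y -> f x <= f y.
Proof.
move=> [x0 Sx0] fS coercive.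
have [[y Sy]|] := pselect (exists2 y, S y & f y < +oo); last first.
  move=> /forall2NP f_oo; exists x0 => // y Sy.
  by case: (f_oo y) => // /negP; rewrite -leNgt leye_eq => /eqP ->; exact: leey.
case fyE: (f y) => [M||] // _; last by exists y => // z _; rewrite fyE leNye.
have [K [cK subK KS]] := coercive M.
have Ky : K y by apply: subK; split => //; rewrite fyE.
have [x Kx xmin] := compact_lower_semicontinuous_min _ _ cK (ex_intro _ y Ky)
  (lower_semicontinuous_withinS _ _ _ KS fS).
exists x; first exact: KS.
move=> z Sz; have [fzM|/ltW Mfz] := leP (f z) M%:E.
  by apply: xmin; exact: subK.
by apply: le_trans Mfz; rewrite -fyE; exact: xmin.
Qed.

End lower_semicontinuous_within.

Lemma weighted_telescope_ge (R : numDomainType) (a : nat -> R) (q : R) k :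
  0 <= q <= 1 -> nonincreasing_seq a -> 0 <= a k ->
  q ^+ k * a 0%N <= a k + \sum_(1 <= j < k.+1) (a j.-1 - a j) * q ^+ (k - j + 1).
Proof.
move=> /andP[q_ge0 q_le1] a_dec ak_ge0.
have telescope : \sum_(1 <= j < k.+1) (a j.-1 - a j) = a 0%N - a k.
  rewrite big_add1 /= -opprB -telescope_sumr // -sumrN.
  by apply: eq_bigr => j _; rewrite opprB.
have weights : \sum_(1 <= j < k.+1) (a j.-1 - a j) * q ^+ k <=
               \sum_(1 <= j < k.+1) (a j.-1 - a j) * q ^+ (k - j + 1).
  rewrite big_nat [X in _ <= X]big_nat; apply: ler_sum => j /andP[j_gt0 j_le].
  rewrite ler_wpM2l ?subr_ge0 ?a_dec ?leq_pred //.
  by rewrite ler_wiXn2l // addn1 ltn_subrL j_gt0 (leq_trans j_gt0 j_le).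
rewrite -big_distrl /= telescope in weights.
have qk_le1 : q ^+ k <= 1 by exact: exprn_ile1.
apply: le_trans (lerD (lexx _) weights).
by rewrite mulrBl addrCA mulrC lerDl subr_ge0 ler_piMr.
Qed.

Lemma continuous_powRr (R : realType) (a : R) : 0 < a -> continuous (powR a).
Proof.
move=> a_gt0; have -> : powR a = fun x => expR (x * ln a).
  by apply/funext => x; rewrite /powR gt_eqF.
move=> x; apply: continuous_comp; first exact: mulrr_continuous.
exact: continuous_expR.
Qed.

Lemma compact_box (R : realType) (B : nat -> R) :
  compact [set t : {ptws nat -> R} | forall k, 0 <= t k <= B k].
Proof.
have -> : [set t : {ptws nat -> R} | forall k, 0 <= t k <= B k] =
          [set t | forall k, `[0, B k]%classic (t k)].
  by apply/seteqP; split => t /= t_in k; have := t_in k; rewrite /= in_itv.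
exact: (@tychonoff nat (fun=> R) _ (fun k => @segment_compact R 0 (B k))).
Qed.

Section two_doors.
Variable R : realType.
Variables p1 p2 c : R.
Hypothesis p1_ge0 : 0 <= p1.
Hypothesis p1_lt1 : p1 < 1.
Hypothesis p2_ge0 : 0 <= p2.
Hypothesis p2_lt1 : p2 < 1.
Hypothesis c_ge0 : 0 <= c.
Implicit Type t : nat -> R.

Lemma cumT_nondecreasing t : semi_fractional t -> nondecreasing_seq (cumT t).
Proof.
by move=> t_ge0; apply/nondecreasing_seqP => k; rewrite /cumT big_ord_recr lerDl.
Qed.

Lemma closed1_nonincreasing : {homo closed1 p1 : x y /~ x <= y}.
Proof. by move=> x y; apply: ger_powR; rewrite subr_gt0 p1_lt1 lerBlDr lerDl. Qed.

Lemma expr_le_survival t k :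
  semi_fractional t -> (1 - p2) ^+ k <= survival p1 p2 t k.
Proof.
move=> t_ge0; rewrite /survival.
have -> : (1 - p2) ^+ k = (1 - p2) ^+ k * closed1 p1 (cumT t 0%N).
  by rewrite /closed1 /cumT big_ord0 powRr0 mulr1.
apply: weighted_telescope_ge; last exact: powR_ge0.
  by rewrite subr_ge0 (ltW p2_lt1) lerBlDr lerDl.
by move=> m n mn; apply: closed1_nonincreasing; exact: cumT_nondecreasing.
Qed.

Definition partial_time t N := \sum_(0 <= k < N) (t k + c) * survival p1 p2 t k.

Lemma block_time_ge0 t k :
  semi_fractional t -> 0 <= (t k + c) * survival p1 p2 t k.
Proof.
move=> t_ge0; apply: mulr_ge0; first by rewrite addr_ge0 ?t_ge0.
apply: le_trans (expr_le_survival t k t_ge0).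
by rewrite exprn_ge0 // subr_ge0 ltW.
Qed.

Lemma continuous_cumT k : continuous (fun t : {ptws nat -> R} => cumT t k).
Proof.
apply: continuous_big => [|i _]; first exact: add_continuous.
exact: proj_continuous.
Qed.

Lemma continuous_closed1_cumT k :
  continuous (fun t : {ptws nat -> R} => closed1 p1 (cumT t k)).
Proof.
move=> t; apply: (continuous_comp (continuous_cumT k t)).
by apply: continuous_powRr; rewrite subr_gt0.
Qed.

Lemma continuous_survival k :
  continuous (fun t : {ptws nat -> R} => survival p1 p2 t k).
Proof.
move=> t; rewrite /survival; apply: (@continuousD R R^o {ptws nat -> R}).
  exact: continuous_closed1_cumT.
apply: continuous_big => [|j _]; first exact: add_continuous.
move=> {}t; apply: (@continuousM R {ptws nat -> R}); last exact: cst_continuous.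
by apply: (@continuousB R R^o {ptws nat -> R}); exact: continuous_closed1_cumT.
Qed.

Lemma continuous_partial_time N :
  continuous (fun t : {ptws nat -> R} => partial_time t N).
Proof.
apply: continuous_big => [|k _]; first exact: add_continuous.
move=> t; apply: (@continuousM R {ptws nat -> R}).
  apply: (@continuousD R R^o {ptws nat -> R}); first exact: proj_continuous.
  exact: cst_continuous.
exact: continuous_survival.
Qed.

Local Open Scope ereal_scope.

Lemma partial_time_le_expected_time t N : semi_fractional t ->
  (partial_time t N)%:E <= expected_time p1 p2 c t.
Proof.
move=> t_ge0; rewrite /partial_time -sumEFin.
by apply: nneseries_lim_ge => k _ _; rewrite lee_fin block_time_ge0.
Qed.

Lemma expected_time_le t (M : R) : semi_fractional t ->
  (forall N, partial_time t N <= M)%R -> expected_time p1 p2 c t <= M%:E.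
Proof.
move=> t_ge0 le_M; apply: lime_le.
  by apply: is_cvg_nneseries => k _ _; rewrite lee_fin block_time_ge0.
by apply: nearW => N; rewrite sumEFin lee_fin le_M.
Qed.

Lemma knock_time_le_expected_time t k : semi_fractional t ->
  (t k * (1 - p2) ^+ k)%:E <= expected_time p1 p2 c t.
Proof.
move=> t_ge0; apply: le_trans (partial_time_le_expected_time t k.+1 t_ge0).
rewrite lee_fin /partial_time big_nat_recr //=; apply: ler_wpDl.
  by rewrite sumr_ge0 // => j _; exact: block_time_ge0.
by rewrite ler_pM ?lerDl ?expr_le_survival ?exprn_ge0 ?subr_ge0 ?(ltW p2_lt1).
Qed.

(* Only within semi-fractional sequences: elsewhere the series may have
   negative terms and expected_time is the junk limit of a divergent sequence. *)
Lemma expected_time_lower_semicontinuous :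
  lower_semicontinuous_within (@semi_fractional R : set {ptws nat -> R})
    (expected_time p1 p2 c : {ptws nat -> R} -> \bar R).
Proof.
move=> t t_ge0 [a| |] a_lt; last 2 first.
- by rewrite ltNge leey in a_lt.
- apply: filterE => y y_ge0.
  by apply: lt_le_trans (partial_time_le_expected_time y 0 y_ge0); exact: ltNyr.
have [N a_lt_N] : exists N, (a < partial_time t N)%R.
  apply: contrapT => /forallNP N_le; move: a_lt; rewrite ltNge => /negP; apply.
  by apply: expected_time_le => // N; rewrite leNgt; exact/negP/N_le.
apply: filterS (cvgr_gt _ (continuous_partial_time N t) _ a_lt_N).
move=> y a_lt_y y_ge0.
by apply: lt_le_trans (partial_time_le_expected_time y N y_ge0); rewrite lte_fin.
Qed.

End two_doors.

Theorem mainTheorem16 (R : realType) (p1 p2 c : R) :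
  0 < p1 < 1 -> 0 < p2 < 1 -> 0 < c ->
  exists t : nat -> R, semi_fractional t /\
    forall t' : nat -> R, semi_fractional t' ->
      (expected_time p1 p2 c t <= expected_time p1 p2 c t')%E.
Proof.
move=> /andP[/ltW p1_ge0 p1_lt1] /andP[/ltW p2_ge0 p2_lt1] /ltW c_ge0.
have [t t_ge0 t_min] : exists2 t : {ptws nat -> R}, semi_fractional t &
      forall t', semi_fractional t' ->
        (expected_time p1 p2 c t <= expected_time p1 p2 c t')%E.
  apply: lower_semicontinuous_coercive_min.
  - by exists (fun=> 0) => k.
  - exact: expected_time_lower_semicontinuous.
  move=> M; exists [set t | forall k, 0 <= t k <= M / (1 - p2) ^+ k]; split.
  - exact: compact_box.
  - move=> t [t_ge0 E_le_M] k; rewrite t_ge0 ler_pdivlMr ?exprn_gt0 ?subr_gt0 //.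
    by rewrite -lee_fin (le_trans _ E_le_M) ?knock_time_le_expected_time.
  - by move=> t t_box k; case/andP: (t_box k).
by exists t.
Qed.
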